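(* Let $k\geq 1$ and $n\geq 0$ be integers, and let $m$ be an integer with $\lfloor n/(k+1)\rfloor \leq m \leq \lfloor n/k\rfloor$. Then \[ \sum_{i=0}^{n} f_i^{(k)} = \sum_{j=0}^{m} (-1)^{j} \binom{n-jk}{j}2^{n-j(k+1)}. \]
   Context: For an integer $k\geq 1$, the $k$-bonacci numbers $f_n^{(k)}$ ($n\in\mathbb{Z}$) are defined by $f_n^{(k)}=0$ for $n<0$, $f_0^{(k)}=1$, and $f_n^{(k)}=\sum_{i=1}^{k} f_{n-i}^{(k)}$ for $n\geq 1$. Here $\lfloor x\rfloor$ is the floor function, and $\binom{a}{b}=0$ when $0\le a<b$. *)

From mathcomp Require Import all_boot all_order all_algebra.
Set Implicit Arguments. Unset Strict Implicit. Unset Printing Implicit Defensive.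
Import Order.TTheory GRing.Theory Num.Theory.

(* kbon_list k n = [:: f_n; f_{n-1}; ...; f_0] (k-bonacci values, most recent first) *)
Fixpoint kbon_list (k n : nat) : seq nat :=
  match n with
  | 0 => [:: 1]
  | n'.+1 => let l := kbon_list k n' in sumn (take k l) :: l
  end.

(* k-bonacci number f_n^{(k)} for n >= 0: f_0 = 1, f_n = sum_{i=1}^k f_{n-i},
   with f_j = 0 for j < 0 (take k l = the k previous values, fewer near the start, i.e. missing ones = 0). *)
Definition kbonacci (k n : nat) : nat := head 0 (kbon_list k n).

(* Proof: writing S n for the partial sum f_0 + ... + f_n, the recursion gives
   f_{n+1} = S n - S (n - k), hence S (n + 1) = 2 S n - S (n - k) (the last
   term only when k <= n).  Pascal's rule shows that the alternating binomial
   sums satisfy the same recurrence for any base x in place of 2, and both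
   sides equal 1 at n = 0.  Terms with j (k + 1) > n vanish. *)
From mathcomp Require Import all_boot all_order all_algebra.
From mathcomp Require Import zify ring.
Import Order.TTheory GRing.Theory Num.Theory.

Definition kbonacci_sum (k n : nat) : nat := \sum_(0 <= i < n.+1) kbonacci k i.

Lemma drop_kbon_list k j p :
  drop j (kbon_list k p) = if (j <= p)%N then kbon_list k (p - j) else [::].
Proof. by elim: j p => [|j IHj] [|p] //=; rewrite ?drop0 ?subn0 ?IHj. Qed.

Lemma sumn_kbon_list k p : sumn (kbon_list k p) = kbonacci_sum k p.
Proof.
rewrite /kbonacci_sum; elim: p => [|p IHp]; first by rewrite big_nat1.
by rewrite big_nat_recr //= -IHp addnC.
Qed.

Lemma kbonacciS k p :
  (kbonacci k p.+1 + (if (k <= p)%N then kbonacci_sum k (p - k) else 0) =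
   kbonacci_sum k p)%N.
Proof.
rewrite /kbonacci /= -(sumn_kbon_list k p).
rewrite -[in RHS](cat_take_drop k (kbon_list k p)) sumn_cat drop_kbon_list.
by case: ifP; rewrite ?sumn_kbon_list.
Qed.

Lemma kbonacci_sumS k p :
  (kbonacci_sum k p.+1 + (if (k <= p)%N then kbonacci_sum k (p - k) else 0) =
   2 * kbonacci_sum k p)%N.
Proof. by rewrite {1}/kbonacci_sum big_nat_recr //= -addnA kbonacciS mul2n -addnn. Qed.

Local Open Scope ring_scope.

Definition lag_recurrence {R : pzRingType} (k : nat) (x : R) (u : nat -> R) :=
  forall p, u p.+1 + (if (k <= p)%N then u (p - k)%N else 0) = x * u p.

Lemma lag_recurrence_unique (R : pzRingType) k (x : R) u v :
  lag_recurrence k x u -> lag_recurrence k x v -> u 0%N = v 0%N -> u =1 v.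
Proof.
move=> rec_u rec_v eq_uv0; elim/ltn_ind => -[// | p] IHp.
have eq_lag : (if (k <= p)%N then u (p - k)%N else 0) =
              (if (k <= p)%N then v (p - k)%N else 0).
  by case: ifP => // _; apply: IHp; rewrite ltnS leq_subr.
apply: (addIr (if (k <= p)%N then u (p - k)%N else 0)).
by rewrite rec_u [in RHS]eq_lag rec_v IHp.
Qed.

Lemma kbonacci_sum_lag_recurrence (R : pzRingType) k :
  lag_recurrence k (2%:R : R) (fun n => (kbonacci_sum k n)%:R).
Proof. by move=> p /=; rewrite -natrM -kbonacci_sumS natrD; case: ifP. Qed.

Lemma bin_sub_mul_eq0 n j k : (n < j * k.+1)%N -> 'C(n - j * k, j) = 0%N.
Proof. by move=> lt_n; apply: bin_small; lia. Qed.

Definition alt_binom_term {R : pzRingType} k (x : R) n j : R :=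
  (-1) ^+ j * 'C(n - j * k, j)%:R * x ^+ (n - j * k.+1).

Definition alt_binom_sum {R : pzRingType} k (x : R) n : R :=
  \sum_(0 <= j < (n %/ k.+1).+1) alt_binom_term k x n j.

Section AltBinomSum.
Variables (R : comPzRingType) (k : nat) (x : R).

Lemma alt_binom_term0 n : alt_binom_term k x n 0 = x ^+ n.
Proof. by rewrite /alt_binom_term !mul0n !subn0 bin0 expr0 !mul1r. Qed.

Lemma alt_binom_term_eq0 n j : (n < j * k.+1)%N -> alt_binom_term k x n j = 0.
Proof. by move=> lt_n; rewrite /alt_binom_term bin_sub_mul_eq0 // mulr0 mul0r. Qed.

Lemma alt_binom_sum_widen n B : (n %/ k.+1 < B)%N ->
  \sum_(0 <= j < B) alt_binom_term k x n j = alt_binom_sum k x n.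
Proof.
move=> lt_B; rewrite /alt_binom_sum (big_cat_nat _ (n := (n %/ k.+1).+1)) //=.
rewrite [X in _ + X]big1_seq ?addr0 // => j /andP[_].
rewrite mem_index_iota => /andP[lt_j _]; apply: alt_binom_term_eq0.
by apply: leq_trans (ltn_ceil n (ltn0Sn k)) _; rewrite leq_mul2r lt_j orbT.
Qed.

Lemma binom_lag_pascal p i :
  'C(p.+1 - i.+1 * k, i.+1)%:R * x ^+ (p.+1 - i.+1 * k.+1) =
  x * ('C(p - i.+1 * k, i.+1)%:R * x ^+ (p - i.+1 * k.+1)) +
  (if (k <= p)%N then 'C(p - k - i * k, i)%:R * x ^+ (p - k - i * k.+1) else 0).
Proof.
have [small | large] := ltnP p.+1 (i.+1 * k.+1).
  by case: ifP => le_kp; rewrite !bin_sub_mul_eq0 ?mul0r ?mulr0 ?addr0 //; lia.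
have -> : (k <= p)%N by lia.
(* With p + 1 = (i + 1) (k + 1) + d this is Pascal's rule for 'C(i + d + 1, i + 1). *)
set d := (p.+1 - i.+1 * k.+1)%N.
have [-> -> -> -> ->] : [/\ p.+1 - i.+1 * k = (i + d).+1, p - i.+1 * k = i + d,
    p - k - i * k = i + d, p - k - i * k.+1 = d & p - i.+1 * k.+1 = d.-1]%N.
  by rewrite /d; split; lia.
rewrite binS natrD mulrDl; congr (_ + _).
case: d => [|d]; first by rewrite addn0 bin_small ?mul0r ?mulr0.
by rewrite exprS mulrCA.
Qed.

Lemma alt_binom_termSS p i :
  alt_binom_term k x p.+1 i.+1 +
    (if (k <= p)%N then alt_binom_term k x (p - k)%N i else 0) =
  x * alt_binom_term k x p i.+1.
Proof.
rewrite /alt_binom_term -!mulrA binom_lag_pascal.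
by case: ifP => _; rewrite exprS; ring.
Qed.

Lemma alt_binom_sum_lag_recurrence : lag_recurrence k x (alt_binom_sum k x).
Proof.
move=> p.
have ltS_div n B : (n <= B)%N -> (n %/ k.+1 < B.+1)%N.
  by move=> le_nB; rewrite ltnS (leq_trans (leq_div _ _)).
rewrite -(alt_binom_sum_widen p.+1 p.+2) ?ltS_div // big_nat_recl //.
rewrite -(alt_binom_sum_widen p p.+2) ?ltS_div //.
rewrite [in RHS]big_nat_recl // mulrDr mulr_sumr !alt_binom_term0 -exprS -addrA.
have -> : (if (k <= p)%N then alt_binom_sum k x (p - k)%N else 0) =
    \sum_(0 <= i < p.+1) (if (k <= p)%N then alt_binom_term k x (p - k)%N i else 0).
  case: ifP => _; last by rewrite big1.
  by rewrite alt_binom_sum_widen ?ltS_div ?leq_subr.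
by rewrite -big_split; congr (_ + _); apply: eq_bigr => i _; exact: alt_binom_termSS.
Qed.

End AltBinomSum.

Lemma alt_binom_term_exprz (R : comUnitRingType) k (x : R) n j :
  (-1) ^+ j * 'C(n - j * k, j)%:R * x ^ (n%:Z - (j * k.+1)%:Z) =
  alt_binom_term k x n j.
Proof.
have [le_n | lt_n] := leqP (j * k.+1) n; first by rewrite subzn.
by rewrite alt_binom_term_eq0 // bin_sub_mul_eq0 // mulr0 mul0r.
Qed.

Theorem corollary3p1 (k n m : nat) :
  (1 <= k)%N ->
  (n %/ k.+1 <= m)%N -> (m <= n %/ k)%N ->
  ((\sum_(0 <= i < n.+1) kbonacci k i)%:R : rat) =
  \sum_(0 <= j < m.+1)
     (-1) ^+ j * ('C(n - j * k, j))%:R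
       * (2%:R : rat) ^ ((n%:Z) - (j * k.+1)%:Z).
Proof.
move=> _ le_m _.
have sums_eq : (fun n => (kbonacci_sum k n)%:R) =1 alt_binom_sum k (2%:R : rat).
  apply: lag_recurrence_unique (kbonacci_sum_lag_recurrence _ k)
                               (alt_binom_sum_lag_recurrence _ _ _) _.
  by rewrite /kbonacci_sum /alt_binom_sum div0n !big_nat1 alt_binom_term0.
transitivity (alt_binom_sum k (2%:R : rat) n); first exact: sums_eq.
rewrite -(alt_binom_sum_widen _ k _ n m.+1) ?ltnS //.
by apply: eq_bigr => j _; rewrite alt_binom_term_exprz.
Qed.
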